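(* Let $(\alpha,\beta)\in\mathcal{A}(K,L,T)$, let $p$ and $q$ be the entries of $\alpha$ and $\beta$ sorted increasingly, and $a=\min\operatorname{Set}(\alpha)$, $A=\max\operatorname{Set}(\alpha)$, $b=\min\operatorname{Set}(\beta)$, $B=\max\operatorname{Set}(\beta)$. If there is an $i$ with $1\le i<K+T$ and $p_i+B\le p_{i+1}+b$, then there is no $j$ with $1\le j<L+T$ and $q_j+A<(q_{j+1}-1)+a$. If there is an $i$ with $1\le i<L+T$ and $q_i+A\le q_{i+1}+a$, then there is no $j$ with $1\le j<K+T$ and $p_j+B<(p_{j+1}-1)+b$.
   Context: A degree table with parameters $K,L,T$ is a tuple $(\alpha_{\mathrm p},\alpha_{\mathrm s},\beta_{\mathrm p},\beta_{\mathrm s})$ of nonnegative integer vectors of lengths $K,T,L,T$ such that, with $\alpha=(\alpha_{\mathrm p}\mid\alpha_{\mathrm s})$, $\beta=(\beta_{\mathrm p}\mid\beta_{\mathrm s})$: entries of $\alpha$ are distinct; entries of $\beta$ are distinct; every $n\in\operatorname{Set}(\alpha_{\mathrm p})+\operatorname{Set}(\beta_{\mathrm p})$ has a unique representation $n=i+j$ with $i\in\operatorname{Set}(\alpha)$, $j\in\operatorname{Set}(\beta)$. $\operatorname{Set}(v)$ is the set of entries of $v$, and $\mathcal{A}(K,L,T)$ is the set of degree tables. *)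

From mathcomp Require Import all_boot.
Set Implicit Arguments. Unset Strict Implicit. Unset Printing Implicit Defensive.

(* A degree table with parameters K L T: vectors are sequences of naturals of
   lengths K, T, L, T; alpha = ap ++ as_, beta = bp ++ bs. *)
Definition degree_table (K L T : nat) (ap as_ bp bs : seq nat) : Prop :=
  [/\ size ap = K /\ size as_ = T, size bp = L /\ size bs = T,
      uniq (ap ++ as_), uniq (bp ++ bs) &
      forall n, (exists i j, i \in ap /\ j \in bp /\ n = i + j) ->
        forall i1 j1 i2 j2,
          i1 \in ap ++ as_ -> j1 \in bp ++ bs ->
          i2 \in ap ++ as_ -> j2 \in bp ++ bs ->
          n = i1 + j1 -> n = i2 + j2 -> i1 = i2 /\ j1 = j2].

Definition seqmin (s : seq nat) : nat := foldr minn (head 0 s) s.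
Definition seqmax (s : seq nat) : nat := \max_(x <- s) x.

(* Every entry of a sequence lies between its minimum and its maximum, so
   p_i + B <= p_(i+1) + b forces B - b <= A - a, while
   q_j + A < (q_(j+1) - 1) + a forces A - a < B - b - 1. *)
From mathcomp Require Import all_boot.
From mathcomp Require Import zify.

Set Implicit Arguments.
Unset Strict Implicit.
Unset Printing Implicit Defensive.

Lemma seqmin_le (s : seq nat) x : x \in s -> seqmin s <= x.
Proof.
rewrite /seqmin; move: (head 0 s) => d.
elim: s => [|y s IH] //=; rewrite in_cons => /orP[/eqP -> | /IH le_x].
  exact: geq_minl.
by rewrite geq_min le_x orbT.
Qed.

Lemma le_seqmax (s : seq nat) x : x \in s -> x <= seqmax s.
Proof. by move=> s_x; rewrite /seqmax (@leq_bigmax_seq _ s xpredT id x s_x). Qed.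

Lemma mem_nth_sort (s : seq nat) k : k < size s -> nth 0 (sort leq s) k \in s.
Proof. by move=> lt_k; rewrite -(mem_sort leq) mem_nth // size_sort. Qed.

Lemma no_wide_gaps_in_both (s t : seq nat) x x' y y' :
  x \in s -> x' \in s -> y \in t -> y' \in t ->
  x + seqmax t <= x' + seqmin t ->
  ~ y + seqmax s < (y' - 1) + seqmin s.
Proof.
move=> /seqmin_le x_ge /le_seqmax x'_le /seqmin_le y_ge /le_seqmax y'_le.
lia.
Qed.

Lemma no_wide_sorted_gaps_in_both (s t : seq nat) i j :
  i.+1 < size s -> j.+1 < size t ->
  nth 0 (sort leq s) i + seqmax t <= nth 0 (sort leq s) i.+1 + seqmin t ->
  ~ nth 0 (sort leq t) j + seqmax s < (nth 0 (sort leq t) j.+1 - 1) + seqmin s.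
Proof.
move=> lt_i lt_j.
by apply: no_wide_gaps_in_both; apply: mem_nth_sort => //; apply: ltnW.
Qed.

(* Indices are 0-based: p_i, p_{i+1} (1-based, 1 <= i < K+T) become
   nth 0 p i, nth 0 p i.+1 with i.+1 < K+T. *)
Theorem lemma6 (K L T : nat) (ap as_ bp bs : seq nat) :
  degree_table K L T ap as_ bp bs ->
  let alpha := ap ++ as_ in
  let beta := bp ++ bs in
  let p := sort leq alpha in
  let q := sort leq beta in
  let a := seqmin alpha in
  let A := seqmax alpha in
  let b := seqmin beta in
  let B := seqmax beta in
  ((exists i, i.+1 < K + T /\ nth 0 p i + B <= nth 0 p i.+1 + b) ->
     ~ (exists j, j.+1 < L + T /\
          nth 0 q j + A < (nth 0 q j.+1 - 1) + a)) /\
  ((exists i, i.+1 < L + T /\ nth 0 q i + A <= nth 0 q i.+1 + a) ->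
     ~ (exists j, j.+1 < K + T /\
          nth 0 p j + B < (nth 0 p j.+1 - 1) + b)).
Proof.
case=> [[size_ap size_as] [size_bp size_bs] _ _ _] alpha beta p q a A b B.
have size_alpha : size alpha = K + T by rewrite size_cat size_ap size_as.
have size_beta : size beta = L + T by rewrite size_cat size_bp size_bs.
split=> -[i [lt_i gap_i]] [j [lt_j gap_j]].
- rewrite -size_alpha in lt_i; rewrite -size_beta in lt_j.
  exact: (no_wide_sorted_gaps_in_both lt_i lt_j gap_i gap_j).
- rewrite -size_beta in lt_i; rewrite -size_alpha in lt_j.
  exact: (no_wide_sorted_gaps_in_both lt_i lt_j gap_i gap_j).
Qed.
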